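(* Let $x,z\in X^\infty$. Then $(F_x,\phi_x)\cong(F_z,\phi_z)$ as extended representation graphs if and only if $x\sim_\infty z$.
   Context: $E=(E^0,E^1,s,r)$ is a row-finite directed graph; for each vertex $v$ emitting an edge a fixed edge $e^v\in s^{-1}(v)$ is called special, others nonspecial. The double graph $E_d$ has vertices $E^0$ and edges $e$ (real) and $e^*$ (ghost) for $e\in E^1$, with $s_d(e)=s(e),r_d(e)=r(e),s_d(e^* )=r(e),r_d(e^* )=s(e)$. For a path $p=e_1\dots e_n$ set $p^*=e_n^*\dots e_1^*$. The set $X$ of (finite) basis paths consists of the paths in $E_d$: vertices; $p,p^*$ for paths $p$ of length $\ge1$ in $E$; $pq^*$ with $p=e_1\dots e_k,q=f_1\dots f_n$ of length $\ge1$ in $E$, $r(p)=r(q)$, and $e_k\ne f_n$ or $e_k=f_n$ nonspecial. $X^\infty$ is the set of left-infinite words $x=\dots x_3x_2x_1$ of edges of $E_d$ such that each $x_n\dots x_1$ is a basis path; $x\sim_\infty z$ iff there are $m,n\ge0$ with $\dots x_{m+2}x_{m+1}=\dots z_{n+2}z_{n+1}$. An extended representation graph for $E$ is a pair $(F,\phi)$, $F$ a directed graph, $\phi:F\to E_d$ a graph homomorphism, such that for every $w\in F^0$: (i) $w$ is a source or receives exactly one edge $f_w$; (ii) if $w$ is a source or $\phi(f_w)$ is a nonspecial real edge, $\phi$ maps $s^{-1}(w)$ bijectively onto $s_d^{-1}(\phi(w))$; (iii) if $\phi(f_w)$ is a special real edge, onto $s_d^{-1}(\phi(w))\setminus\{\phi(f_w)^*\}$;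 (iv) if $\phi(f_w)$ is a ghost edge, onto the ghost edges in $s_d^{-1}(\phi(w))$. An isomorphism $(F,\phi)\to(G,\psi)$ is a graph isomorphism $\alpha$ with $\psi\circ\alpha=\phi$. $(F_x,\phi_x)$ for $x=\dots x_2x_1\in X^\infty$: for $i\in\mathbb N$, $X_i$ = basis paths $y=y_1\dots y_n$, $n\ge1$, with $x_iy_1$ a basis path and $y_1\ne x_{i-1}$ if $i\ge2$. Vertices $w_i$ ($i\in\mathbb N$), $w_{i,y}$ ($y\in X_i$), all distinct; edges $f_i$ from $w_{i+1}$ to $w_i$, and $f_{i,y}$ to $w_{i,y}$ from $w_i$ if $|y|=1$, from $w_{i,y_1\dots y_{n-1}}$ if $n\ge2$; $\phi_x(w_i)=r_d(x_i)$, $\phi_x(w_{i,y})=r_d(y)$, $\phi_x(f_i)=x_i$, $\phi_x(f_{i,y})=$ last edge of $y$. *)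

From Stdlib Require List.
From mathcomp Require Import all_boot.
Set Implicit Arguments. Unset Strict Implicit. Unset Printing Implicit Defensive.

Record digraph := DiGraph { gV : Type; gE : Type; gs : gE -> gV; gr : gE -> gV }.

Definition row_finite (E : digraph) : Prop :=
  forall v : gV E, exists l : seq (gE E), forall e, gs e = v -> List.In e l.

Definition special_choice (E : digraph) (special : gE E -> Prop) : Prop :=
  forall v : gV E, (exists e, gs e = v) -> exists! e, gs e = v /\ special e.

(* Edges of the double graph E_d: real edges e and ghost edges e^*. *)
Inductive dedge (T : Type) := Real of T | Ghost of T.
Arguments Real {T}. Arguments Ghost {T}.

Section Double.
Variable E : digraph.

Definition sd (a : dedge (gE E)) : gV E :=
  match a with Real e => gs e | Ghost e => gr e end.
Definition rd (a : dedge (gE E)) : gV E :=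
  match a with Real e => gr e | Ghost e => gs e end.

Definition double : digraph := DiGraph sd rd.

Fixpoint dpath (l : seq (dedge (gE E))) : Prop :=
  match l with
  | a :: ((b :: _) as l') => rd a = sd b /\ dpath l'
  | _ => True
  end.

Variable special : gE E -> Prop.

(* Basis paths of length >= 1: p (p real path), q^* , or p q^* with
   r(p) = r(q) and e_k <> f_n or e_k = f_n nonspecial.  Writing
   q = f_1 ... f_n, q^* = f_n^* ... f_1^* = map Ghost g with g = f_n ... f_1,
   so f_n is the head of g.  Consecutiveness (dpath) gives that p, q are
   paths in E and r(p) = r(q). *)
Definition basis_path (l : seq (dedge (gE E))) : Prop :=
  l <> [::] /\ dpath l /\
  exists (p g : seq (gE E)),
    l = map Real p ++ map Ghost g /\
    forall p' e f g', p = rcons p' e -> g = f :: g' -> e <> f \/ ~ special e.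

(* Left-infinite words x = ... x_3 x_2 x_1 are encoded as x : nat -> dedge
   with x k = x_{k+1} (shift of indices by one). *)
Definition X_inf (x : nat -> dedge (gE E)) : Prop :=
  forall n, 0 < n -> basis_path (rev (mkseq x n)).   (* x_n ... x_1 *)

Definition sim_inf (x z : nat -> dedge (gE E)) : Prop :=
  exists m n, forall k, x (m + k) = z (n + k).

(* ---- The graph (F_x, phi_x).  Shifted indices: RW i stands for w_{i+1}
   and RWy i y for w_{i+1,y}. ---- *)
Variable x : nat -> dedge (gE E).

(* y in X_{i+1} (paper's index i+1) *)
Definition Xi (i : nat) (y : seq (dedge (gE E))) : Prop :=
  match y with
  | [::] => False
  | y1 :: _ => basis_path y /\ basis_path [:: x i; y1] /\ (0 < i -> y1 <> x i.-1)
  end.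

Inductive rawv := RW of nat | RWy of nat & seq (dedge (gE E)).

Definition validv (v : rawv) : Prop :=
  match v with RW _ => True | RWy i y => Xi i y end.

Definition Fvert := {v : rawv | validv v}.

(* Every vertex except none receives exactly one edge; we index edges by their
   range: the edge into w_i is f_i (from w_{i+1}), the edge into w_{i,y} is
   f_{i,y} (from w_i if |y| = 1, from w_{i, y_1 ... y_{n-1}} otherwise). *)
Definition src_raw (v : rawv) : rawv :=
  match v with
  | RW i => RW i.+1
  | RWy i [::] => RW i
  | RWy i [:: _] => RW i
  | RWy i (y1 :: (y2 :: ys)) => RWy i (belast y1 (y2 :: ys))
  end.

Lemma dpath_rcons (l : seq (dedge (gE E))) a : dpath (rcons l a) -> dpath l.
Proof.
elim: l => [|b [|c l] IH] //= [H1 H2]; split => //; exact: IH.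
Qed.

Lemma basis_path_rcons (l : seq (dedge (gE E))) a :
  l <> [::] -> basis_path (rcons l a) -> basis_path l.
Proof.
move=> ln [_ [hp [p [g [hl hj]]]]]; split => //; split; first exact: dpath_rcons hp.
case/lastP: g hl hj => [|g f] hl hj.
  case/lastP: p hl hj => [|p e] hl hj.
    by move: hl; rewrite /= => /(congr1 size); rewrite size_rcons.
  exists p, [::]; split; last by [].
  by move: hl; rewrite cats0 map_rcons => /rcons_inj [->]; rewrite cats0.
exists p, g; split.
  by move: hl; rewrite map_rcons -rcons_cat => /rcons_inj [->].
move=> p' e f' g' hp' hg'; apply: (hj p' e f' (rcons g' f) hp').
by rewrite hg'.
Qed.

Lemma src_valid (v : rawv) : validv v -> validv (src_raw v).
Proof.
case: v => [i|i [|y1 [|y2 ys]]] //= [hb [h1 h2]]; split; last by split.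
apply: (basis_path_rcons (a := last y2 ys)) => //.
by rewrite rcons_cons -lastI.
Qed.

Definition Fsrc (v : Fvert) : Fvert := exist _ (src_raw (sval v)) (src_valid (svalP v)).

Definition Fx : digraph := @DiGraph Fvert Fvert Fsrc id.

Definition phi0_raw (v : rawv) : gV E :=
  match v with
  | RW i => rd (x i)
  | RWy i [::] => rd (x i) (* unreachable: y is nonempty *)
  | RWy _ (y1 :: ys) => rd (last y1 ys)
  end.

Definition phi1_raw (v : rawv) : dedge (gE E) :=
  match v with
  | RW i => x i
  | RWy i [::] => x i (* unreachable *)
  | RWy _ (y1 :: ys) => last y1 ys
  end.

End Double.

Record ghom (F G : digraph) := GHom { hv : gV F -> gV G; he : gE F -> gE G }.

Definition phix (E : digraph) (special : gE E -> Prop) (x : nat -> dedge (gE E)) :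
  ghom (Fx special x) (double E) :=
  @GHom (Fx special x) (double E)
    (fun v => phi0_raw x (sval v)) (fun e => phi1_raw x (sval e)).

Definition erg_iso (H F G : digraph) (phi : ghom F H) (psi : ghom G H) : Prop :=
  exists (a0 : gV F -> gV G) (a1 : gE F -> gE G),
    bijective a0 /\ bijective a1 /\
    (forall e, gs (a1 e) = a0 (gs e)) /\ (forall e, gr (a1 e) = a0 (gr e)) /\
    (forall v, hv psi (a0 v) = hv phi v) /\ (forall e, he psi (a1 e) = he phi e).

From mathcomp Require Import all_boot.
From Stdlib Require Import ProofIrrelevance ClassicalEpsilon FunctionalExtensionality.
Set Implicit Arguments. Unset Strict Implicit. Unset Printing Implicit Defensive.

(* Every vertex of F_x receives exactly one edge, and following these edges
   backwards from any vertex leads to the spine ... w_3 w_2 w_1, whose edges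
   spell x.  An isomorphism commutes with this backward step and preserves
   labels, so it maps the spine of F_x beyond some w_m onto the spine of F_z
   beyond some w_n, which is x ~ z.
   Conversely F_(...x_3 x_2) is isomorphic to F_x: the branch x_1 y at the
   root w_1 of the former is the branch y at w_1 of the latter.  The branch
   conditions agree because a word is a basis path iff all its two-letter
   subwords are.  Iterating and composing gives F_x ≅ F_z whenever x ~ z. *)

Fixpoint linked (T : Type) (R : T -> T -> Prop) (l : seq T) : Prop :=
  match l with
  | a :: ((b :: _) as l') => R a b /\ linked R l'
  | _ => True
  end.

Lemma linked_and (T : Type) (R S : T -> T -> Prop) l :
  linked (fun a b => R a b /\ S a b) l <-> linked R l /\ linked S l.
Proof. by elim: l => [|a [|b l] IH] //; move: IH => /=; tauto. Qed.

Lemma linked_behead (T : Type) (R : T -> T -> Prop) a l :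
  linked R (a :: l) -> linked R l.
Proof. by case: l => [|b l] // []. Qed.

Section BasisPaths.
Variables (E : digraph) (special : gE E -> Prop).
Local Notation D := (dedge (gE E)).

Lemma dpathE (l : seq D) : dpath l <-> linked (fun a b => rd a = sd b) l.
Proof. by elim: l => [|a [|b l] IH] //; move: IH => /=; tauto. Qed.

Definition turn_ok (a b : D) : Prop :=
  match a, b with
  | Ghost _, Real _ => False
  | Real e, Ghost f => e <> f \/ ~ special e
  | _, _ => True
  end.

Lemma linked_turn_ok_ghost (g : seq (gE E)) : linked turn_ok (map Ghost g).
Proof. by elim: g => [|f [|f' g] IH] //=. Qed.

Lemma real_ghost_split_linked (l : seq D) :
  (exists p g, l = map Real p ++ map Ghost g /\
     forall p' e f g', p = rcons p' e -> g = f :: g' -> e <> f \/ ~ special e)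
  <-> linked turn_ok l.
Proof.
split.
- case=> p [g [-> hturn]].
  elim: p hturn => [|e p IH] hturn /=; first exact: linked_turn_ok_ghost.
  have {}IH := IH (fun p' e' f g' hp => hturn (e :: p') e' f g' (congr1 (cons e) hp)).
  case: p hturn IH => [|e' p] hturn IH /=; last by split.
  by case: g hturn IH => [|f g] hturn IH //=; split; [exact: (hturn [::])|].
- elim: l => [|a l IH] hl; first by exists [::], [::].
  have [p [g [hl' hturn]]] := IH (linked_behead hl).
  case: a hl => [e|f] hl.
  + exists (e :: p), g; split; first by rewrite hl'.
    move=> [|e0 p'] e' f g' /= [].
    * by move=> <- hp hg; move: hl; rewrite hl' hp hg => -[? _].
    * by move=> _; apply: hturn.
  + exists [::], (f :: g); split; last by move=> [|? ?].
    by case: p hl' {hturn} => [|e p] hl'; move: hl; rewrite hl' => //= -[? _].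
Qed.

Definition basis_step (a b : D) : Prop := rd a = sd b /\ turn_ok a b.

Lemma basis_pathE (l : seq D) :
  basis_path special l <-> l <> [::] /\ linked basis_step l.
Proof. by rewrite /basis_path linked_and dpathE real_ghost_split_linked. Qed.

Lemma basis_path_cons2 (a b : D) l :
  basis_path special (a :: b :: l) <->
  basis_path special [:: a; b] /\ basis_path special (b :: l).
Proof. by rewrite !basis_pathE /=; split=> [[_ [? ?]] | [[_ [? _]] [_ ?]]]. Qed.

End BasisPaths.

Section RepresentationGraph.
Variables (E : digraph) (special : gE E -> Prop).

Lemma Fvert_inj (x : nat -> dedge (gE E)) (u v : Fvert special x) :
  sval u = sval v -> u = v.
Proof. by apply: eq_sig_hprop => r p q; apply: proof_irrelevance. Qed.

Lemma phi0_rawE (x : nat -> dedge (gE E)) r :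
  phi0_raw x r = rd (phi1_raw x r).
Proof. by case: r => [i|i [|y1 ys]]. Qed.

Lemma iter_src_raw_RW j k : iter k (@src_raw E) (RW E j) = RW E (j + k).
Proof. by elim: k => [|k IH] /=; rewrite ?addn0 ?IH ?addnS. Qed.

Lemma src_raw_reaches_spine (r : rawv E) :
  exists L j, iter L (@src_raw E) r = RW E j.
Proof.
case: r => [i|i y]; first by exists 0, i.
elim/last_ind: y => [|y a IH]; first by exists 1, i.
case: y IH => [|b y] [L [j IH]]; first by exists 1, i.
exists L.+1, j; rewrite iterSr -IH; congr (iter L _ _).
by case: y {IH} => [|c y] //=; rewrite belast_rcons.
Qed.

Lemma sval_iter_Fsrc (x : nat -> dedge (gE E)) n (v : Fvert special x) :
  sval (iter n (@Fsrc _ _ _) v) = iter n (@src_raw E) (sval v).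
Proof. by elim: n => [|n IH] //=; rewrite IH. Qed.

Lemma erg_iso_sim_inf (x z : nat -> dedge (gE E)) :
  erg_iso (phix special x) (phix special z) -> sim_inf x z.
Proof.
case=> a [a1 [_ [_ [a_src [a1E [_ a_he]]]]]].
(* Edges of F_x are named by their range, so [a1] coincides with [a]. *)
have {}a1E : a1 =1 a := a1E.
have a_Fsrc v : a (Fsrc v) = Fsrc (a v).
  by rewrite -[a v]a1E; exact: esym (a_src v).
have a_iter n v : a (iter n (@Fsrc _ _ _) v) = iter n (@Fsrc _ _ _) (a v).
  by elim: n => [|n IH] //=; rewrite a_Fsrc IH.
pose w0 : Fvert special x := exist _ (RW E 0) I.
have [L [j a_w0]] := src_raw_reaches_spine (sval (a w0)).
exists L, j => k.
have := a_he (iter (L + k) (@Fsrc _ _ _) w0).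
rewrite /= a1E a_iter !sval_iter_Fsrc addnC iterD a_w0 !iter_src_raw_RW /=.
by rewrite add0n addnC => <-.
Qed.

End RepresentationGraph.

Section ErgIso.
Variables (H F G K : digraph) (phi : ghom F H) (psi : ghom G H) (chi : ghom K H).

Lemma erg_iso_refl : erg_iso phi phi.
Proof. by exists id, id; do 2!(split; first by exists id). Qed.

Lemma erg_iso_sym : erg_iso phi psi -> erg_iso psi phi.
Proof.
case=> a0 [a1 [[b0 a0K b0K] [[b1 a1K b1K] [a_src [a_rng [a_hv a_he]]]]]].
exists b0, b1; do 2!(split; first by eexists; eassumption).
split; first by move=> e; apply: (can_inj a0K); rewrite -a_src b1K b0K.
split; first by move=> e; apply: (can_inj a0K); rewrite -a_rng b1K b0K.
by split=> [v|e]; [rewrite -a_hv b0K | rewrite -a_he b1K].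
Qed.

Lemma erg_iso_trans : erg_iso phi psi -> erg_iso psi chi -> erg_iso phi chi.
Proof.
case=> a0 [a1 [a0_bij [a1_bij [a_src [a_rng [a_hv a_he]]]]]].
case=> b0 [b1 [b0_bij [b1_bij [b_src [b_rng [b_hv b_he]]]]]].
exists (b0 \o a0), (b1 \o a1); do 2!(split; first exact: bij_comp).
split; first by move=> e; rewrite /= b_src a_src.
split; first by move=> e; rewrite /= b_rng a_rng.
by split=> [v|e]; rewrite /= ?b_hv ?a_hv ?b_he ?a_he.
Qed.

End ErgIso.

Section Shift.
Variables (E : digraph) (special : gE E -> Prop) (x : nat -> dedge (gE E)).
Hypothesis hx : X_inf special x.
Local Notation D := (dedge (gE E)).

Lemma X_inf_succ : X_inf special (fun k => x k.+1).
Proof.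
move=> n n_gt0; have := hx (isT : 0 < n.+1).
rewrite /mkseq /= -[1]/(1 + 0) iotaDl -map_comp rev_cons.
apply: basis_path_rcons => /(congr1 size).
by rewrite size_rev size_map size_iota => n0; rewrite n0 in n_gt0.
Qed.

Let eq_dec (a b : D) : {a = b} + {a <> b} := excluded_middle_informative (a = b).

(* In paper indices: the vertex w_(1,y) of F_(...x_3 x_2) is w_(2,y) of F_x,
   except that w_(1, x_1 y') is w_(1,y') and w_(1, x_1) is w_1. *)
Definition shift_raw (r : rawv E) : rawv E :=
  match r with
  | RW i => RW E i.+1
  | RWy i.+1 y => RWy i.+2 y
  | RWy 0 [::] => RWy 1 [::]
  | RWy 0 (y1 :: ys) =>
      if eq_dec y1 (x 0) then (if ys is [::] then RW E 0 else RWy 0 ys)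
      else RWy 1 (y1 :: ys)
  end.

Definition unshift_raw (r : rawv E) : rawv E :=
  match r with
  | RW 0 => RWy 0 [:: x 0]
  | RW i.+1 => RW E i
  | RWy 0 y => RWy 0 (x 0 :: y)
  | RWy 1 y => RWy 0 y
  | RWy i.+2 y => RWy i.+1 y
  end.

Lemma shift_rawK : cancel shift_raw unshift_raw.
Proof.
case=> [i|[|i] [|y1 ys]] //=.
by case: eq_dec => [y1_eq|] //=; case: ys; rewrite y1_eq.
Qed.

Lemma unshift_rawK r : validv special x r -> shift_raw (unshift_raw r) = r.
Proof.
case: r => [[|i]|[|[|i]] [|y1 ys]] //=; try by case: eq_dec.
by case=> _ [_ y1_neq]; case: eq_dec => // y1_eq; case: (y1_neq isT).
Qed.

Lemma src_raw_shift r : src_raw (shift_raw r) = shift_raw (src_raw r).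
Proof. by case: r => [i|[|i] [|y1 [|y2 [|y3 ys]]]] //=; case: eq_dec. Qed.

Lemma phi1_raw_shift r : phi1_raw x (shift_raw r) = phi1_raw (fun k => x k.+1) r.
Proof.
case: r => [i|[|i] [|y1 ys]] //=.
by case: eq_dec => [y1_eq|] //=; case: ys; rewrite y1_eq.
Qed.

Lemma shift_raw_valid r :
  validv special (fun k => x k.+1) r -> validv special x (shift_raw r).
Proof.
case: r => [i|[|i] [|y1 [|y2 ys]]] //=;
  case: eq_dec => /= [->|y1_neq] [y_bp [xy_bp _]] //.
by case/basis_path_cons2: y_bp.
Qed.

Lemma unshift_raw_valid r :
  validv special x r -> validv special (fun k => x k.+1) (unshift_raw r).
Proof.
have x0_bp : basis_path special [:: x 0] := hx (isT : 0 < 1).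
have x10_bp : basis_path special [:: x 1; x 0] := hx (isT : 0 < 2).
case: r => [[|i]|[|[|i]] [|y1 ys]] //=.
- by case=> y_bp [xy_bp _]; split; [apply/basis_path_cons2 | split].
- by case=> ? [].
Qed.

Lemma erg_iso_succ : erg_iso (phix special (fun k => x k.+1)) (phix special x).
Proof.
pose a (v : Fvert special (fun k => x k.+1)) : Fvert special x :=
  exist _ (shift_raw (sval v)) (shift_raw_valid (svalP v)).
pose b (v : Fvert special x) : Fvert special (fun k => x k.+1) :=
  exist _ (unshift_raw (sval v)) (unshift_raw_valid (svalP v)).
have a_bij : bijective a.
  exists b => v; apply: Fvert_inj; first exact: shift_rawK.
  by rewrite /= unshift_rawK //; case: v.
exists a, a; do 2!(split; first exact: a_bij).
split; first by move=> v; apply: Fvert_inj; rewrite /= src_raw_shift.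
by split=> //; split=> v; rewrite /= ?phi0_rawE phi1_raw_shift.
Qed.

End Shift.

Section Tails.
Variables (E : digraph) (special : gE E -> Prop).

Lemma erg_iso_drop m (x : nat -> dedge (gE E)) :
  X_inf special x -> erg_iso (phix special (fun k => x (m + k))) (phix special x).
Proof.
elim: m x => [|m IH] x hx; first exact: erg_iso_refl.
exact: erg_iso_trans (IH _ (X_inf_succ hx)) (erg_iso_succ hx).
Qed.

Lemma sim_inf_erg_iso (x z : nat -> dedge (gE E)) :
  X_inf special x -> X_inf special z -> sim_inf x z ->
  erg_iso (phix special x) (phix special z).
Proof.
move=> hx hz [m [n tails_eq]].
apply: erg_iso_trans (erg_iso_sym (erg_iso_drop m hx)) _.
by rewrite (functional_extensionality _ _ tails_eq); exact: erg_iso_drop hz.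
Qed.

End Tails.

Theorem proposition5p9 (E : digraph) (special : gE E -> Prop)
  (hrf : row_finite E) (hsp : special_choice special)
  (x z : nat -> dedge (gE E))
  (hx : X_inf special x) (hz : X_inf special z) :
  erg_iso (phix special x) (phix special z) <-> sim_inf x z.
Proof.
split; [exact: erg_iso_sim_inf | exact: sim_inf_erg_iso].
Qed.
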